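(* Let $n\ge 2$. The tropical symplectic Grassmannian $\mathrm{TSpGr}(2,2n)$ is isomorphic as a fan to $\mathbb{R}^n\times H_{n-2}\times\mathbf{T}_{2n}$, where $H_{n-2}$ denotes a generic (standard) tropical hyperplane in $\mathbb{TP}^{n-1}$ and $\mathbf{T}_{2n}$ is the space of phylogenetic trees with $2n$ labeled leaves.
   Context: $[2n]=\{1,\dots,n,\bar1,\dots,\bar n\}$. $\mathrm{TSpGr}(2,2n)$ is the tropicalization (over an algebraically closed valued field, of any characteristic; it is independent of the characteristic) of the symplectic Grassmannian of $2$-dimensional subspaces of $\mathbb{K}^{2n}$ isotropic for the standard symplectic form, in the Plücker embedding; equivalently, the set of $\mu\in\mathbb{TP}^{\binom{2n}{2}-1}$ such that for all $i<j<k<l$ in $[2n]$ the minimum of $\mu_{ij}+\mu_{kl},\mu_{ik}+\mu_{jl},\mu_{il}+\mu_{jk}$ is attained at least twice, and the minimum of $\mu_{1\bar1},\dots,\mu_{n\bar n}$ is attained at least twice. The generic tropical hyperplane $H_{n-2}\subseteq\mathbb{TP}^{n-1}$ is the fan where $\min(x_1,\dots,x_n)$ is attained at least twice. $\mathbf{T}_{2n}$ is the space of phylogenetic trees on $2n$ leaves (Billera–Holmes–Vogtmann), viewed as the fan with rays indexed by splits of the leaf set into two parts of size at least $2$ and cones indexed by sets of pairwise compatible splits. *)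

From HB Require Import structures.
From mathcomp Require Import all_boot all_order all_algebra.
From mathcomp Require Import reals.
Set Implicit Arguments. Unset Strict Implicit. Unset Printing Implicit Defensive.
Import Order.TTheory GRing.Theory Num.Theory.
Local Open Scope ring_scope.

(* The label set [2n] = {1,...,n, 1bar,...,nbar}, realised as 'I_(n + n):
   i (0 <= i < n) is [unbar i] = lshift n i and ibar is [bar i] = rshift n i,
   so the order 1 < ... < n < 1bar < ... < nbar is the order of 'I_(n+n). *)
Definition leaf (n : nat) := 'I_(n + n).
Definition unbar (n : nat) (i : 'I_n) : leaf n := lshift n i.
Definition bar (n : nat) (i : 'I_n) : leaf n := rshift n i.

Definition pair_pred (n : nat) (p : leaf n * leaf n) : bool := (p.1 < p.2)%N.
Definition pair (n : nat) := {p : leaf n * leaf n | pair_pred p}.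

Notation plucker_space R n := {ffun pair n -> R^o}.

(* mu_{ij} = mu_{ji} for i <> j (the value 0 for i = j is never used) *)
Definition pl (R : realType) (n : nat) (mu : plucker_space R n) (i j : leaf n) : R :=
  if @insub _ (@pair_pred n) (pair n) (i, j) is Some p then mu p
  else if @insub _ (@pair_pred n) (pair n) (j, i) is Some p then mu p else 0.

Definition min_twice (R : realType) (I : finType) (f : I -> R) : Prop :=
  exists i j : I, i != j /\ (forall k, f i <= f k) /\ (forall k, f j <= f k).

Definition min_twice3 (R : realType) (a b c : R) : Prop :=
  min_twice (fun k : 'I_3 => [:: a; b; c]`_k).

(* Points of the torus part of TP^{m-1} = R^m / R(1,...,1) are represented by
   their unique representative with coordinate sum 0 (a canonical linear
   isomorphism R^m / R1 ~ {x | sum x = 0}). *)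
Definition normalized (R : realType) (I : finType) (x : {ffun I -> R}) : Prop :=
  \sum_(i : I) x i = 0.

Definition TSpGr (R : realType) (n : nat) (mu : plucker_space R n) : Prop :=
  normalized mu /\
  (forall i j k l : leaf n, (i < j)%N -> (j < k)%N -> (k < l)%N ->
     min_twice3 (pl mu i j + pl mu k l) (pl mu i k + pl mu j l)
                (pl mu i l + pl mu j k)) /\
  min_twice (fun i : 'I_n => pl mu (unbar i) (bar i)).

Definition tropH (R : realType) (n : nat) (x : {ffun 'I_n -> R}) : Prop :=
  normalized x /\ min_twice (fun i => x i).

Definition coneH (R : realType) (n : nat) (S : {set 'I_n})
  (x : {ffun 'I_n -> R}) : Prop :=
  normalized x /\ (forall i k, i \in S -> x i <= x k).

Definition is_split (n : nat) (s : {set {set leaf n}}) : bool :=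
  [exists A : {set leaf n},
     [&& s == [set A; ~: A], (1 < #|A|)%N & (1 < #|~: A|)%N]].
Definition split (n : nat) := {s : {set {set leaf n}} | is_split s}.

Definition compatible (n : nat) (s t : split n) : bool :=
  [exists A in val s, exists B in val t, A :&: B == set0].

(* The BHV space of phylogenetic trees T_{2n}, realised as the union, inside
   R^{splits}, of the orthants R_{>=0}^sigma over pairwise compatible sets
   sigma of splits (an edge-length vector supported on sigma). *)
Definition treespace (R : realType) (n : nat) (w : {ffun split n -> R}) : Prop :=
  (forall s, 0 <= w s) /\
  (forall s t, w s != 0 -> w t != 0 -> compatible s t).

Definition pairwise_compatible (n : nat) (sigma : {set split n}) : Prop :=
  forall s t, s \in sigma -> t \in sigma -> compatible s t.

Definition coneT (R : realType) (n : nat) (sigma : {set split n})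
  (w : {ffun split n -> R}) : Prop :=
  forall s, 0 <= w s /\ (s \notin sigma -> w s = 0).

(* The product fan R^n x H_{n-2} x T_{2n}, in the vector space
   R^n x (R^n/R1) x R^{splits}. *)
Notation prod_space R n :=
  ({ffun 'I_n -> R^o} * {ffun 'I_n -> R^o} * {ffun split n -> R^o})%type.

Definition prod_support (R : realType) (n : nat) (d : prod_space R n) : Prop :=
  tropH d.1.2 /\ treespace d.2.

Definition prod_cone (R : realType) (n : nat) (S : {set 'I_n})
  (sigma : {set split n}) (d : prod_space R n) : Prop :=
  coneH S d.1.2 /\ coneT sigma d.2.

(* A fan isomorphism from the product fan onto TSpGr(2,2n): a bijection from
   the support of the product fan onto TSpGr(2,2n) which is linear on every
   cone of the product fan (the images of the cones then form a fan structure
   on TSpGr(2,2n) isomorphic to the product fan). *)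
Definition fan_iso_onto_TSpGr (R : realType) (n : nat)
  (Phi : prod_space R n -> plucker_space R n) : Prop :=
  (forall d, prod_support d -> TSpGr (Phi d)) /\
  (forall mu, TSpGr mu -> exists d, prod_support d /\ Phi d = mu) /\
  (forall d e, prod_support d -> prod_support e -> Phi d = Phi e -> d = e) /\
  (forall (S : {set 'I_n}) (sigma : {set split n}),
     (1 < #|S|)%N -> pairwise_compatible sigma ->
     exists L : {linear prod_space R n -> plucker_space R n},
       forall d, prod_cone S sigma d -> Phi d = L d).

(* Let [tree_dist w] be the metric of a weighted tree [w]: the total weight of
   the splits separating two leaves. For [d = (x, y, w)] put [a i = x i],
   [a ibar = y i - x i + tree_dist w i ibar] and
   [Phi d = a p + a q - tree_dist w p q], normalized to coordinate sum 0; [Phi]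
   is linear. The three-term Plücker relations for [Phi d] are the four-point
   condition of the tree metric, and [mu_{i ibar}] is [y i] up to the
   normalizing constant, so the symplectic relation says exactly that [y] lies
   on the tropical hyperplane. [Phi] is injective because quartet differences
   determine the weights of a tree. For surjectivity, the Farris transform
   [mu_ij - mu_ir - mu_jr] at the first leaf [r] satisfies the three-point
   condition on the other leaves, so it is a constant plus the weights of a
   hierarchy of clusters containing [i] and [j]; these clusters are the
   [r]-free sides of the splits of a tree [w] with
   [mu_ij = a i + a j - tree_dist w i j]. *)

From Pilot Require Import Defs.
From HB Require Import structures.
From mathcomp Require Import all_boot all_order all_algebra.
From mathcomp Require Import reals boolp.
From mathcomp.algebra_tactics Require Import ring lra.
From mathcomp Require Import zify.
Set Implicit Arguments. Unset Strict Implicit. Unset Printing Implicit Defensive.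
Import Order.TTheory GRing.Theory Num.Theory.
Local Open Scope ring_scope.

Definition compatible_sets (T : finType) (X Y : {set T}) :=
  [|| [disjoint X & Y], X \subset Y, Y \subset X | [disjoint ~: X & ~: Y]].

Section Splits.
Variable n : nat.
Implicit Types (s t : Defs.split n) (X Y : {set leaf n}) (i j : leaf n).

Lemma split_witness s : exists A : {set leaf n},
  [&& val s == [set A; ~: A], (1 < #|A|)%N & (1 < #|~: A|)%N].
Proof. exact/existsP/(valP s). Qed.

Definition side s : {set leaf n} := xchoose (split_witness s).

Lemma sideP s : [/\ val s = [set side s; ~: side s], (1 < #|side s|)%N
  & (1 < #|~: side s|)%N].
Proof. by case/and3P: (xchooseP (split_witness s)) => /eqP. Qed.

Lemma mem_split s X : (X \in val s) = (X == side s) || (X == ~: side s).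
Proof. by case: (sideP s) => -> _ _; rewrite !inE. Qed.

Lemma side_in_split s : side s \in val s.
Proof. by rewrite mem_split eqxx. Qed.

Lemma split_valE s X : X \in val s -> val s = [set X; ~: X].
Proof.
rewrite mem_split => /orP[]/eqP->; case: (sideP s) => -> _ _ //.
by rewrite setCK setUC.
Qed.

Lemma mem_splitC s X : X \in val s -> ~: X \in val s.
Proof. by move/split_valE->; rewrite !inE eqxx orbT. Qed.

Lemma split_eq_of_mem s t X : X \in val t -> X = side s -> t = s.
Proof. by move=> Xt eX; apply: val_inj; rewrite (split_valE Xt) eX; case: (sideP s). Qed.

Lemma compatibleE s t X Y : X \in val s -> Y \in val t ->
  compatible s t = compatible_sets X Y.
Proof.
move=> Xs Yt; rewrite /compatible (split_valE Xs) (split_valE Yt) /compatible_sets.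
rewrite !subsets_disjoint [[disjoint Y & _]]disjoint_sym.
apply/existsP/idP => [[A /andP[]]|].
  rewrite !inE => /orP[]/eqP-> /existsP[B /andP[]];
  by rewrite !inE => /orP[]/eqP-> /[!setI_eq0] ->; rewrite ?orbT.
case/or4P => h; [exists X | exists X | exists (~: X) | exists (~: X)];
  rewrite !inE eqxx ?orbT /=; apply/existsP;
  [exists Y | exists (~: Y) | exists Y | exists (~: Y)];
  rewrite !inE eqxx ?orbT /=; apply/eqP/disjoint_setI0; exact: h.
Qed.

Definition separates s i j := (i \in side s) != (j \in side s).

Lemma separatesE s X i j : X \in val s -> separates s i j = ((i \in X) != (j \in X)).
Proof.
rewrite /separates mem_split => /orP[]/eqP-> //; rewrite ?inE.
by case: (i \in side s); case: (j \in side s).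
Qed.

Lemma separatesC s i j : separates s i j = separates s j i.
Proof. by rewrite /separates eq_sym. Qed.

End Splits.

Section QuartetTypes.
Variables x1 x2 x3 x4 : bool.

(* [xk] tells on which side of a split the k-th leaf of a quartet lies;
   [ncut12] counts the pairs {1,2}, {3,4} cut by the split, and [quartet12]
   says that the split induces the quartet 12|34. *)
Definition ncut12 := ((x1 != x2) + (x3 != x4))%N.
Definition ncut13 := ((x1 != x3) + (x2 != x4))%N.
Definition ncut14 := ((x1 != x4) + (x2 != x3))%N.
Definition quartet12 := [&& x1 == x2, x3 == x4 & x1 != x3].
Definition quartet13 := [&& x1 == x3, x2 == x4 & x1 != x2].
Definition quartet14 := [&& x1 == x4, x2 == x3 & x1 != x2].

Ltac quartet_cases := rewrite /ncut12 /ncut13 /ncut14 /quartet12 /quartet13 /quartet14;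
  move: x1 x2 x3 x4; do 4 case.

Lemma ncut_not13_not14 : ~~ quartet13 -> ~~ quartet14 -> ncut13 = ncut14 /\ (ncut12 <= ncut13)%N.
Proof. by quartet_cases. Qed.
Lemma ncut_not12_not14 : ~~ quartet12 -> ~~ quartet14 -> ncut12 = ncut14 /\ (ncut13 <= ncut12)%N.
Proof. by quartet_cases. Qed.
Lemma ncut_not12_not13 : ~~ quartet12 -> ~~ quartet13 -> ncut12 = ncut13 /\ (ncut14 <= ncut12)%N.
Proof. by quartet_cases. Qed.
Lemma ncut_trivial : ~~ quartet12 -> ~~ quartet13 -> ~~ quartet14 -> ncut12 = ncut13.
Proof. by quartet_cases. Qed.
Lemma ncut_quartet12 : quartet12 -> ncut13 = 2%N /\ ncut12 = 0%N.
Proof. by quartet_cases. Qed.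
Lemma quartet12_sides : quartet12 -> [/\ x2 = x1, x3 = ~~ x1 & x4 = ~~ x1].
Proof. by quartet_cases. Qed.

End QuartetTypes.

(* Some quadrant of the two splits [x] and [y] contains none of the four leaves. *)
Definition quadrant_free (x1 x2 x3 x4 y1 y2 y3 y4 : bool) :=
  [|| [&& ~~ (x1 && y1), ~~ (x2 && y2), ~~ (x3 && y3) & ~~ (x4 && y4)],
      [&& x1 ==> y1, x2 ==> y2, x3 ==> y3 & x4 ==> y4],
      [&& y1 ==> x1, y2 ==> x2, y3 ==> x3 & y4 ==> x4] |
      [&& x1 || y1, x2 || y2, x3 || y3 & x4 || y4]].

Lemma quartet_types_exclusive x1 x2 x3 x4 y1 y2 y3 y4 :
  quadrant_free x1 x2 x3 x4 y1 y2 y3 y4 ->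
  [/\ quartet12 x1 x2 x3 x4 -> ~~ quartet13 y1 y2 y3 y4 && ~~ quartet14 y1 y2 y3 y4,
      quartet13 x1 x2 x3 x4 -> ~~ quartet12 y1 y2 y3 y4 && ~~ quartet14 y1 y2 y3 y4 &
      quartet14 x1 x2 x3 x4 -> ~~ quartet12 y1 y2 y3 y4 && ~~ quartet13 y1 y2 y3 y4].
Proof.
rewrite /quadrant_free /quartet12 /quartet13 /quartet14.
by move: x1 x2 x3 x4 y1 y2 y3 y4; do 8 case.
Qed.

Lemma quadrant_free_of_compatible (T : finType) (X Y : {set T}) (i j k l : T) :
  compatible_sets X Y ->
  quadrant_free (i \in X) (j \in X) (k \in X) (l \in X)
                (i \in Y) (j \in Y) (k \in Y) (l \in Y).
Proof.
rewrite /quadrant_free; case/or4P => h.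
- have hx x : ~~ ((x \in X) && (x \in Y)).
    by apply/negP => /andP[/(disjointFr h) ->].
  by rewrite !hx.
- have hx x : (x \in X) ==> (x \in Y) by apply/implyP/(subsetP h).
  by rewrite !hx orbT.
- have hx x : (x \in Y) ==> (x \in X) by apply/implyP/(subsetP h).
  by rewrite !hx !orbT.
- have hx x : (x \in X) || (x \in Y).
    case: (boolP (x \in X)) => //= xX.
    by move: (disjointFr h (x := x)); rewrite !inE xX => /(_ isT)/negbFE.
  by rewrite !hx !orbT.
Qed.

Section WeightedSums.
Variables (R : realType) (I : finType) (w : I -> R).

Lemma eq_sum_support (f g : I -> nat) : (forall t, w t != 0 -> f t = g t) ->
  \sum_t w t * (f t)%:R = \sum_t w t * (g t)%:R.
Proof. by move=> h; apply: eq_bigr => t _; have [->|/h ->] := eqVneq (w t) 0; rewrite ?mul0r. Qed.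

Lemma ler_sum_support (f g : I -> nat) : (forall t, 0 <= w t) ->
  (forall t, w t != 0 -> (f t <= g t)%N) ->
  \sum_t w t * (f t)%:R <= \sum_t w t * (g t)%:R.
Proof.
move=> w0 h; apply: ler_sum => t _; have [->|/h le] := eqVneq (w t) 0; first by rewrite !mul0r.
by rewrite ler_wpM2l // ler_nat.
Qed.

Lemma sum_neq0 (P : pred I) : \sum_(i | P i) w i != 0 -> exists i, P i && (w i != 0).
Proof.
move=> h; apply/existsP; apply: contraR h => /existsPn h.
by rewrite big1 // => i Pi; move: (h i); rewrite Pi /= negbK => /eqP.
Qed.

End WeightedSums.

Section TreeMetric.
Variables (R : realType) (n : nat).
Implicit Types (w : {ffun Defs.split n -> R}) (s t : Defs.split n) (i j k l : leaf n).

Definition tree_dist w i j : R := \sum_(s | separates s i j) w s.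

Lemma tree_distE w i j : tree_dist w i j = \sum_s w s * (separates s i j)%:R.
Proof. by rewrite /tree_dist big_mkcond; apply: eq_bigr => s _; case: ifP; rewrite ?mulr1 ?mulr0. Qed.

Lemma tree_distC w i j : tree_dist w i j = tree_dist w j i.
Proof. by apply: eq_bigl => s; rewrite separatesC. Qed.

Definition dsum12 w i j k l := tree_dist w i j + tree_dist w k l.
Definition dsum13 w i j k l := tree_dist w i k + tree_dist w j l.
Definition dsum14 w i j k l := tree_dist w i l + tree_dist w j k.

End TreeMetric.

Section FourPoint.
Variables (R : realType) (n : nat) (w : {ffun Defs.split n -> R}).
Hypothesis hw : treespace w.
Variables i j k l : leaf n.
Implicit Types s t : Defs.split n.

Local Notation at_split P s := (P (i \in side s) (j \in side s) (k \in side s) (l \in side s)).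
Local Notation d12 := (dsum12 w i j k l).
Local Notation d13 := (dsum13 w i j k l).
Local Notation d14 := (dsum14 w i j k l).

Let w_ge0 : forall s, 0 <= w s. Proof. by case: hw. Qed.

Lemma dsum12E : d12 = \sum_s w s * (at_split ncut12 s)%:R.
Proof. rewrite /dsum12 !tree_distE -big_split /=; apply: eq_bigr => s _; rewrite -mulrDr -natrD; reflexivity. Qed.
Lemma dsum13E : d13 = \sum_s w s * (at_split ncut13 s)%:R.
Proof. rewrite /dsum13 !tree_distE -big_split /=; apply: eq_bigr => s _; rewrite -mulrDr -natrD; reflexivity. Qed.
Lemma dsum14E : d14 = \sum_s w s * (at_split ncut14 s)%:R.
Proof. rewrite /dsum14 !tree_distE -big_split /=; apply: eq_bigr => s _; rewrite -mulrDr -natrD; reflexivity. Qed.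

Lemma quadrant_free_support s t : w s != 0 -> w t != 0 ->
  quadrant_free (i \in side s) (j \in side s) (k \in side s) (l \in side s)
                (i \in side t) (j \in side t) (k \in side t) (l \in side t).
Proof.
case: hw => _ hc ws wt; apply: quadrant_free_of_compatible.
by rewrite -(compatibleE (side_in_split s) (side_in_split t)) hc.
Qed.

Lemma support_quartet12 s : w s != 0 -> at_split quartet12 s ->
  forall t, w t != 0 -> ~~ at_split quartet13 t && ~~ at_split quartet14 t.
Proof. by move=> ws q t wt; case: (quartet_types_exclusive (quadrant_free_support ws wt)) => /(_ q). Qed.
Lemma support_quartet13 s : w s != 0 -> at_split quartet13 s ->
  forall t, w t != 0 -> ~~ at_split quartet12 t && ~~ at_split quartet14 t.
Proof. by move=> ws q t wt; case: (quartet_types_exclusive (quadrant_free_support ws wt)) => _ /(_ q). Qed.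
Lemma support_quartet14 s : w s != 0 -> at_split quartet14 s ->
  forall t, w t != 0 -> ~~ at_split quartet12 t && ~~ at_split quartet13 t.
Proof. by move=> ws q t wt; case: (quartet_types_exclusive (quadrant_free_support ws wt)) => _ _ /(_ q). Qed.

Lemma dsum_no_quartet1314 :
  (forall t, w t != 0 -> ~~ at_split quartet13 t && ~~ at_split quartet14 t) ->
  d13 = d14 /\ d12 <= d13.
Proof.
move=> h; rewrite dsum12E dsum13E dsum14E; split.
  by apply: eq_sum_support => t /h /andP[a b]; case: (ncut_not13_not14 a b).
by apply: (ler_sum_support w_ge0) => t /h /andP[a b]; case: (ncut_not13_not14 a b).
Qed.

Lemma dsum_no_quartet1214 :
  (forall t, w t != 0 -> ~~ at_split quartet12 t && ~~ at_split quartet14 t) ->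
  d12 = d14 /\ d13 <= d12.
Proof.
move=> h; rewrite dsum12E dsum13E dsum14E; split.
  by apply: eq_sum_support => t /h /andP[a b]; case: (ncut_not12_not14 a b).
by apply: (ler_sum_support w_ge0) => t /h /andP[a b]; case: (ncut_not12_not14 a b).
Qed.

Lemma dsum_no_quartet1213 :
  (forall t, w t != 0 -> ~~ at_split quartet12 t && ~~ at_split quartet13 t) ->
  d12 = d13 /\ d14 <= d12.
Proof.
move=> h; rewrite dsum12E dsum13E dsum14E; split.
  by apply: eq_sum_support => t /h /andP[a b]; case: (ncut_not12_not13 a b).
by apply: (ler_sum_support w_ge0) => t /h /andP[a b]; case: (ncut_not12_not13 a b).
Qed.

(* Compatible splits cannot display two different quartet types, so at most one
   of the three quartet types occurs in the support of [w]. *)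
Lemma tree_four_point :
  [\/ d13 = d14 /\ d12 <= d13, d12 = d14 /\ d13 <= d12 | d12 = d13 /\ d14 <= d12].
Proof.
have [/existsP[s /andP[ws qs]]|no13] := boolP [exists s, (w s != 0) && at_split quartet13 s].
  by apply: Or32; apply: dsum_no_quartet1214; exact: support_quartet13 ws qs.
have [/existsP[s /andP[ws qs]]|no14] := boolP [exists s, (w s != 0) && at_split quartet14 s].
  by apply: Or33; apply: dsum_no_quartet1213; exact: support_quartet14 ws qs.
apply: Or31; apply: dsum_no_quartet1314 => t wt; apply/andP; split.
  by apply: contra no13 => qt; apply/existsP; exists t; rewrite wt.
by apply: contra no14 => qt; apply/existsP; exists t; rewrite wt.
Qed.

Lemma quartet12_lower s : w s != 0 -> at_split quartet12 s -> 2 * w s <= d13 - d12.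
Proof.
move=> ws qs; have h := support_quartet12 ws qs.
rewrite dsum12E dsum13E -sumrB (bigD1 s) //=.
case: (ncut_quartet12 qs) => -> ->.
rewrite mulr0 subr0 mulrC lerDl; apply: sumr_ge0 => t _.
rewrite -mulrBr; have [->|/h /andP[a b]] := eqVneq (w t) 0; first by rewrite mul0r.
by rewrite mulr_ge0 ?w_ge0 // subr_ge0 ler_nat; case: (ncut_not13_not14 a b).
Qed.

Lemma quartet13_dsum t : w t != 0 -> at_split quartet13 t -> d13 <= d12.
Proof. by move=> wt qt; case: (dsum_no_quartet1214 (support_quartet13 wt qt)). Qed.

Lemma quartet12_exact s : at_split quartet12 s ->
  (forall t, w t != 0 -> t != s ->
     [&& ~~ at_split quartet12 t, ~~ at_split quartet13 t & ~~ at_split quartet14 t]) ->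
  d13 - d12 = 2 * w s.
Proof.
move=> qs h; rewrite dsum12E dsum13E -sumrB (bigD1 s) //=.
case: (ncut_quartet12 qs) => -> ->.
rewrite mulr0 subr0 mulrC big1 ?addr0 // => t ts.
rewrite -mulrBr; have [->|/h/(_ ts)/and3P[a b c]] := eqVneq (w t) 0; first by rewrite mul0r.
by rewrite (ncut_trivial a b c) subrr mulr0.
Qed.

End FourPoint.

Section ProperClusters.
Variables (R : realType) (n : nat) (w : {ffun Defs.split n -> R}).
Hypothesis hw : treespace w.
Implicit Types (s t : Defs.split n) (A C X : {set leaf n}).

Definition supp_cluster C := [exists t, (w t != 0) && (C \in val t)].

Lemma supp_clusterP t C : w t != 0 -> C \in val t -> supp_cluster C.
Proof. by move=> wt Ct; apply/existsP; exists t; rewrite wt. Qed.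

Lemma supp_cluster_compatible C D :
  supp_cluster C -> supp_cluster D -> compatible_sets C D.
Proof.
case/existsP=> s /andP[ws Cs] /existsP[t /andP[wt Dt]].
by rewrite -(compatibleE Cs Dt); case: hw => _; exact.
Qed.

Lemma pair_in_no_proper_cluster A : (1 < #|A|)%N -> (exists z, z \notin A) ->
  exists a1 a2, [/\ a1 \in A, a2 \in A, a1 != a2 &
    forall C, supp_cluster C -> C \proper A -> ~~ ((a1 \in C) && (a2 \in C))].
Proof.
move=> cA [z zA].
have [a1 a1A] : exists a1, a1 \in A by apply/card_gt0P; apply: ltn_trans cA.
pose P C := [&& supp_cluster C, C \proper A & a1 \in C].
have [C0 PC0|P0] := pickP P; last first.
  have : (0 < #|A :\ a1|)%N by rewrite (cardsD1 a1) a1A in cA.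
  case/card_gt0P => a2; rewrite !inE => /andP[a21 a2A].
  exists a1, a2; split => //; first by rewrite eq_sym.
  move=> C hC CA; apply/negP => /andP[a1C _].
  by have := P0 C; rewrite /P hC CA a1C.
(* A largest cluster [Cm] satisfying [P] misses some [a2] of [A]; by
   laminarity no cluster satisfying [P] contains [a2]. *)
have [Cm /and3P[hCm CmA a1Cm] Cmax] := arg_maxnP (fun C : {set leaf n} => #|C|) PC0.
have [a2] : exists a2, a2 \in A :\: Cm.
  apply/card_gt0P; move: CmA; rewrite properEcard => /andP[sub lt].
  by rewrite cardsD (setIidPr sub) subn_gt0.
rewrite !inE => /andP[a2Cm a2A].
exists a1, a2; split => //; first by apply: contraNneq a2Cm => <-.
move=> C hC CA; apply/negP => /andP[a1C a2C].
have le : (#|C| <= #|Cm|)%N by apply: Cmax; rewrite /P hC CA a1C.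
case/or4P: (supp_cluster_compatible hCm hC) => h.
- by rewrite (disjointFr h a1Cm) in a1C.
- have : Cm \proper C by rewrite properEneq h andbT; apply: contraNneq a2Cm => ->.
  by move/proper_card; rewrite ltnNge le.
- by rewrite (subsetP h _ a2C) in a2Cm.
- have zCm : z \in ~: Cm by rewrite inE; apply: contra zA; apply: (subsetP (proper_sub CmA)).
  have := disjointFr h zCm; rewrite inE => /negbFE/(subsetP (proper_sub CA)).
  by rewrite (negbTE zA).
Qed.

Lemma split_quartet_exact s : (forall t, w t != 0 -> compatible s t) ->
  exists a1 a2 b1 b2,
    [/\ a1 \in side s, a2 \in side s, b1 \notin side s & b2 \notin side s] /\
    [/\ a1 != a2, b1 != b2 & dsum13 w a1 a2 b1 b2 - dsum12 w a1 a2 b1 b2 = 2 * w s].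
Proof.
move=> hc; case: (sideP s) => _ cS cSc; set S := side s.
have [a0 a0S] : exists a, a \in S by apply/card_gt0P; apply: ltn_trans cS.
have [z zS] : exists z, z \in ~: S by apply/card_gt0P; apply: ltn_trans cSc.
have [a1 [a2 [a1S a2S a12 pa]]] : exists a1 a2, [/\ a1 \in S, a2 \in S, a1 != a2 &
    forall C, supp_cluster C -> C \proper S -> ~~ ((a1 \in C) && (a2 \in C))].
  by apply: pair_in_no_proper_cluster cS _; exists z; rewrite inE in zS.
have [b1 [b2 [b1S b2S b12 pb]]] : exists b1 b2, [/\ b1 \in ~: S, b2 \in ~: S, b1 != b2 &
    forall C, supp_cluster C -> C \proper ~: S -> ~~ ((b1 \in C) && (b2 \in C))].
  by apply: pair_in_no_proper_cluster cSc _; exists a0; rewrite inE negbK.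
move: b1S b2S; rewrite !inE => b1S b2S.
have qs : quartet12 (a1 \in S) (a2 \in S) (b1 \in S) (b2 \in S).
  by rewrite /quartet12 a1S a2S (negbTE b1S) (negbTE b2S).
exists a1, a2, b1, b2; split=> //; split=> //.
apply: quartet12_exact => // t wt ts.
have cst : compatible_sets S (side t).
  by rewrite -(compatibleE (side_in_split s) (side_in_split t)) hc.
case: (quartet_types_exclusive (quadrant_free_of_compatible a1 a2 b1 b2 cst)).
move=> /(_ qs)/andP[-> ->] _ _; rewrite !andbT; apply/negP => qt.
pose X := if a1 \in side t then side t else ~: side t.
have Xt : X \in val t by rewrite /X; case: ifP => _; [exact: side_in_split | exact/mem_splitC/side_in_split].
have [a1X a2X b1X b2X] : [/\ a1 \in X, a2 \in X, b1 \notin X & b2 \notin X].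
  case: (quartet12_sides qt) => e2 e3 e4.
  by rewrite /X; case: ifP => h1; rewrite ?inE e2 e3 e4 h1 /=.
have tS Y : Y \in val t -> Y != S.
  by move=> Yt; apply: contra ts => /eqP YS; apply/eqP; exact: split_eq_of_mem Yt YS.
have := hc t wt; rewrite (compatibleE (side_in_split s) Xt); case/or4P => h.
- by rewrite (disjointFr h a1S) in a1X.
- have : ~: X \proper ~: S.
    by rewrite properEneq setCS h andbT (inj_eq (@setC_inj _)) tS.
  move/(pb _ (supp_clusterP wt (mem_splitC Xt)))/negP; apply.
  by rewrite !inE b1X b2X.
- have : X \proper S by rewrite properEneq h andbT tS.
  by move/(pa _ (supp_clusterP wt Xt))/negP; apply; rewrite a1X a2X.
- have := disjointFr h (x := b1); rewrite !inE b1S b1X.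
  by move=> /(_ isT).
Qed.

Lemma incompatible_split_quartet s t : w t != 0 -> ~~ compatible s t ->
  exists a1 a2 b1 b2,
    [/\ a1 \in side s, a2 \in side s, b1 \notin side s & b2 \notin side s] /\
    [/\ a1 != a2, b1 != b2 & dsum13 w a1 a2 b1 b2 <= dsum12 w a1 a2 b1 b2].
Proof.
move=> wt; rewrite (compatibleE (side_in_split s) (side_in_split t)) /compatible_sets.
case/norP=> h1 /norP[h2 /norP[h3 h4]].
move: h1; rewrite -setI_eq0 => /set0Pn[a1]; rewrite inE => /andP[a1S a1T].
have /existsP[b2 /andP[b2S b2T]] : [exists b2, (b2 \notin side s) && (b2 \notin side t)].
  apply: contraR h4 => /existsPn nb; rewrite disjoint_subset; apply/subsetP => x.
  by rewrite !inE => xS; move: (nb x); rewrite xS.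
case/subsetPn: h2 => a2 a2S a2T; case/subsetPn: h3 => b1 b1T b1S.
exists a1, a2, b1, b2; split=> //; split.
- by apply: contraNneq a2T => <-.
- by apply: contraNneq b2T => <-.
apply: (quartet13_dsum hw wt).
by rewrite /quartet13 a1T b1T (negbTE a2T) (negbTE b2T).
Qed.

End ProperClusters.

Section TreeWeightsUnique.
Variables (R : realType) (n : nat) (w w' : {ffun Defs.split n -> R}).
Hypotheses (hw : treespace w) (hw' : treespace w').
Hypothesis hD : forall a1 a2 b1 b2 : leaf n, a1 != a2 -> b1 != b2 -> a1 != b1 ->
  a1 != b2 -> a2 != b1 -> a2 != b2 ->
  dsum13 w a1 a2 b1 b2 - dsum12 w a1 a2 b1 b2 =
  dsum13 w' a1 a2 b1 b2 - dsum12 w' a1 a2 b1 b2.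

(* A split of [w'] is either a split of the tree [w] weighted [w s] by the
   quartet [split_quartet_exact], or incompatible with [w], and then a quartet
   of [incompatible_split_quartet] contradicts [quartet12_lower] for [w']. *)
Lemma tree_weight_le s : w' s <= w s.
Proof.
have [->|w's] := eqVneq (w' s) 0; first by case: hw.
have w's_gt0 : 0 < w' s by rewrite lt_def w's; case: hw' => ->.
have across a b : a \in side s -> b \notin side s -> a != b.
  by move=> ha; apply: contraNneq => <-.
have lower a1 a2 b1 b2 : a1 \in side s -> a2 \in side s -> b1 \notin side s ->
    b2 \notin side s -> a1 != a2 -> b1 != b2 ->
    2 * w' s <= dsum13 w a1 a2 b1 b2 - dsum12 w a1 a2 b1 b2.
  move=> a1s a2s b1s b2s a12 b12; rewrite hD //; try by apply: across.
  by apply: quartet12_lower => //; rewrite /quartet12 a1s a2s (negbTE b1s) (negbTE b2s).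
have [/forallP hc|] := boolP [forall t, (w t != 0) ==> compatible s t].
  case: (split_quartet_exact hw (fun t wt => implyP (hc t) wt)).
  move=> a1 [a2 [b1 [b2 [[a1s a2s b1s b2s] [a12 b12 e]]]]].
  by have := lower _ _ _ _ a1s a2s b1s b2s a12 b12; rewrite e ler_pM2l.
rewrite negb_forall => /existsP[t]; rewrite negb_imply => /andP[wt nc].
case: (incompatible_split_quartet hw wt nc).
move=> a1 [a2 [b1 [b2 [[a1s a2s b1s b2s] [a12 b12 e]]]]].
have : 2 * w' s <= 0.
  by apply: le_trans (lower _ _ _ _ a1s a2s b1s b2s a12 b12) _; rewrite subr_le0.
by rewrite pmulr_rle0 // leNgt w's_gt0.
Qed.

End TreeWeightsUnique.

Lemma tree_weights_unique (R : realType) (n : nat) (w w' : {ffun Defs.split n -> R}) :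
  treespace w -> treespace w' ->
  (forall a1 a2 b1 b2 : leaf n, a1 != a2 -> b1 != b2 -> a1 != b1 ->
    a1 != b2 -> a2 != b1 -> a2 != b2 ->
    dsum13 w a1 a2 b1 b2 - dsum12 w a1 a2 b1 b2 =
    dsum13 w' a1 a2 b1 b2 - dsum12 w' a1 a2 b1 b2) ->
  w = w'.
Proof.
move=> hw hw' hD; apply/ffunP => s; apply/le_anti/andP; split.
  by apply: tree_weight_le => // *; symmetry; apply: hD.
exact: tree_weight_le.
Qed.

Section Hierarchy.
Variables (R : realType) (T : finType) (U : T -> T -> R).
Hypothesis U_sym : forall i j, U i j = U j i.
Implicit Types (Y Z C D E : {set T}) (i j k : T).

(* Of the three values of [U] on a triangle of [Y], the two smallest agree. *)
Definition three_point Y := forall i j k, i \in Y -> j \in Y -> k \in Y ->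
  i != j -> j != k -> i != k -> Num.min (U i k) (U j k) <= U i j.

Definition hierarchy_rep Y (m : R) (W : {set T} -> R) :=
  [/\ forall C, 0 <= W C,
      forall C, W C != 0 -> [/\ C \subset Y, C != Y & (1 < #|C|)%N],
      forall C D, W C != 0 -> W D != 0 -> [|| [disjoint C & D], C \subset D | D \subset C],
      exists i j, [/\ i \in Y, j \in Y, i != j & U i j = m] &
      forall i j, i \in Y -> j \in Y -> i != j ->
        U i j = m + \sum_(C : {set T} | (i \in C) && (j \in C)) W C].

Lemma three_point_sub Y Z : Z \subset Y -> three_point Y -> three_point Z.
Proof. by move=> /subsetP ZY hY i j k iZ jZ kZ; apply: hY; apply: ZY. Qed.

Section Glue.
Variables (Y : {set T}) (m : R) (K : T -> {set T}).
Variables (mK : {set T} -> R) (WK : {set T} -> {set T} -> R).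
Hypotheses (K_self : forall i, i \in Y -> i \in K i) (K_sub : forall i, K i \subset Y).
Hypothesis K_eq : forall i j, i \in Y -> j \in K i -> K j = K i.
Hypothesis K_neq : forall i, i \in Y -> K i != Y.
Hypothesis U_out : forall i j, i \in Y -> j \in Y -> j \notin K i -> U i j = m.
Hypothesis U_min : exists i j, [/\ i \in Y, j \in Y, i != j & U i j = m].
Hypothesis K_rep : forall C, C \in K @: Y -> (1 < #|C|)%N -> hierarchy_rep C (mK C) (WK C).
Hypothesis K_min : forall C, C \in K @: Y -> (1 < #|C|)%N -> m <= mK C.

Definition glue_weight D :=
  \sum_(C in K @: Y | (1 < #|C|)%N) (WK C D + (D == C)%:R * (mK C - m)).

Lemma class_of C i : C \in K @: Y -> i \in C -> C = K i.
Proof. by case/imsetP=> j jY -> iK; rewrite (K_eq jY iK). Qed.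

Lemma glue_weight_ge0 D : 0 <= glue_weight D.
Proof.
apply: sumr_ge0 => C /andP[CP cC]; case: (K_rep CP cC) => W0 _ _ _ _.
by rewrite addr_ge0 // mulr_ge0 // subr_ge0 K_min.
Qed.

Lemma glue_weight_support D : glue_weight D != 0 -> exists C,
  [/\ C \in K @: Y, (1 < #|C|)%N, D \subset C & (D == C) || (WK C D != 0)].
Proof.
case/sum_neq0 => C /andP[/andP[CP cC] h]; exists C.
have [->|DC] := eqVneq D C; first by split; rewrite ?subxx ?eqxx.
rewrite (negbTE DC) mul0r addr0 in h.
by case: (K_rep CP cC) => _ /(_ D h)[].
Qed.

Lemma glue_weight_cluster D : glue_weight D != 0 -> [/\ D \subset Y, D != Y & (1 < #|D|)%N].
Proof.
case/glue_weight_support => C [CP cC DC hD].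
have CY : C \subset Y by case/imsetP: CP => i _ ->.
have CneY : C != Y by case/imsetP: CP => i iY ->; exact: K_neq.
split; first exact: subset_trans DC CY.
- by apply: contraNneq CneY => eDY; rewrite eqEsubset CY -eDY.
- by case/orP: hD => [/eqP->//|h]; case: (K_rep CP cC) => _ /(_ D h)[].
Qed.

Lemma glue_weight_laminar D E : glue_weight D != 0 -> glue_weight E != 0 ->
  [|| [disjoint D & E], D \subset E | E \subset D].
Proof.
move=> /glue_weight_support[C1 [C1P c1 D1 h1]] /glue_weight_support[C2 [C2P c2 E2 h2]].
have [eC|neC] := eqVneq C1 C2.
  subst C2; case/orP: h1 => [/eqP->|h1]; first by rewrite E2 !orbT.
  case/orP: h2 => [/eqP->|h2]; first by rewrite D1 !orbT.
  by case: (K_rep C1P c1) => _ _ /(_ D E h1 h2).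
apply/orP; left; rewrite disjoint_subset; apply/subsetP => x xD; rewrite inE.
apply: contra neC => xE.
by rewrite (class_of C1P (subsetP D1 x xD)) (class_of C2P (subsetP E2 x xE)).
Qed.

Lemma glue_class_sum C i j : C \in K @: Y -> (1 < #|C|)%N -> i != j ->
  \sum_(D : {set T} | (i \in D) && (j \in D)) (WK C D + (D == C)%:R * (mK C - m))
  = ((i \in C) && (j \in C))%:R * (U i j - m).
Proof.
move=> CP cC ij; case: (K_rep CP cC) => _ hsupp _ _ hrep.
rewrite big_split /=.
have [/andP[iC jC]|nijC] := boolP ((i \in C) && (j \in C)).
  have -> : \sum_(D : {set T} | (i \in D) && (j \in D)) WK C D = U i j - mK C.
    by rewrite (hrep i j iC jC ij) addrAC subrr add0r.
  rewrite (bigD1 C) /=; last by rewrite iC jC.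
  rewrite eqxx big1 => [|D /andP[_ /negbTE->]]; last by rewrite mul0r.
  by rewrite /= addr0 !mul1r; ring.
rewrite big1 => [|D /andP[iD jD]]; last first.
  have [//|WD] := eqVneq (WK C D) 0.
  by case: (hsupp D WD) => /subsetP DC _ _; rewrite (DC i iD) (DC j jD) in nijC.
rewrite big1 => [|D /andP[iD jD]]; first by rewrite addr0 mul0r.
have [eD|_] := eqVneq D C; last by rewrite mul0r.
by rewrite -eD iD jD in nijC.
Qed.

Lemma glue_rep : hierarchy_rep Y m glue_weight.
Proof.
split; [exact: glue_weight_ge0 | exact: glue_weight_cluster
  | exact: glue_weight_laminar | exact: U_min | move=> i j iY jY ij].
rewrite /glue_weight exchange_big /=.
under eq_bigr => C /andP[CP cC] do rewrite glue_class_sum //.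
have [jK|jK] := boolP (j \in K i).
  have KP : K i \in K @: Y by apply: imset_f.
  have cK : (1 < #|K i|)%N by apply/card_gt1P; exists i, j; rewrite K_self.
  rewrite (bigD1 (K i)) /=; last by rewrite KP cK.
  rewrite K_self // jK mul1r big1 ?addr0; first by ring.
  move=> C /andP[/andP[CP _] neC]; have [iC|] := boolP (i \in C); last by rewrite mul0r.
  by rewrite (class_of CP iC) eqxx in neC.
rewrite big1 ?addr0 => [|C /andP[CP _]]; first by rewrite U_out.
have [iC|] := boolP (i \in C); last by rewrite mul0r.
by rewrite (class_of CP iC) (negbTE jK) andbF mul0r.
Qed.

End Glue.

Section LevelClasses.
Variables (Y : {set T}) (m : R).
Hypothesis hY : three_point Y.
Hypothesis m_le : forall i j, i \in Y -> j \in Y -> i != j -> m <= U i j.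
Variables p q : T.
Hypotheses (pY : p \in Y) (qY : q \in Y) (pq : p != q) (Upq : U p q = m).

(* Strictly above the minimal level [m], the relation [m < U i k] is an
   equivalence on [Y] by the three-point condition. *)
Definition level_class i := [set k in Y | (k == i) || (m < U i k)].

Lemma level_class_self i : i \in Y -> i \in level_class i.
Proof. by move=> iY; rewrite inE iY eqxx. Qed.

Lemma level_class_sub i : level_class i \subset Y.
Proof. by apply/subsetP => k; rewrite inE => /andP[]. Qed.

Lemma level_class_trans i j k : i \in Y ->
  j \in level_class i -> k \in level_class j -> k \in level_class i.
Proof.
rewrite !inE => iY /andP[jY hj] /andP[kY hk]; rewrite kY /=.
have [->|ki] := eqVneq k i; first by [].
have [eji|ji] := eqVneq j i; first by move: hk; rewrite eji (negbTE ki).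
have [ekj|kj] := eqVneq k j; first by move: hj; rewrite ekj (negbTE ji).
rewrite (negbTE ji) /= in hj; rewrite (negbTE kj) /= in hk.
have := hY iY kY jY; rewrite ![i == _]eq_sym ki kj ji => /(_ isT isT isT).
by apply: lt_le_trans; rewrite lt_min hj U_sym hk.
Qed.

Lemma level_class_eq i j : i \in Y -> j \in level_class i -> level_class j = level_class i.
Proof.
move=> iY ji; have jY := subsetP (level_class_sub i) j ji.
have ij : i \in level_class j.
  by move: ji; rewrite !inE iY jY U_sym eq_sym.
apply/setP => k; apply/idP/idP; exact: level_class_trans.
Qed.

Lemma level_class_neq i : i \in Y -> level_class i != Y.
Proof.
move=> iY; apply/negP => /eqP e.
have pK : p \in level_class i by rewrite e.
have : q \in level_class p by rewrite (level_class_eq iY pK) e.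
by rewrite inE qY eq_sym (negbTE pq) /= Upq ltxx.
Qed.

Lemma U_out_level_class i j : i \in Y -> j \in Y -> j \notin level_class i -> U i j = m.
Proof.
move=> iY jY; rewrite inE jY /= negb_or => /andP[ji]; rewrite -leNgt => le.
by apply/le_anti; rewrite le m_le // eq_sym.
Qed.

Lemma level_class_min C mC WC : C \in level_class @: Y -> hierarchy_rep C mC WC -> m <= mC.
Proof.
case/imsetP=> k kY -> [_ _ _ [i [j [iC jC ij <-]]] _].
move: jC; rewrite -(level_class_eq kY iC) inE eq_sym (negbTE ij) /=.
by move=> /andP[_ /ltW].
Qed.

End LevelClasses.

Lemma three_point_hierarchy Y : three_point Y -> (1 < #|Y|)%N ->
  exists m W, hierarchy_rep Y m W.
Proof.
move: {2}#|Y|.+1 (ltnSn #|Y|) => N; elim: N Y => // N IH Y ltY hY cY.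
pose P (p : T * T) := [&& p.1 \in Y, p.2 \in Y & p.1 != p.2].
have [p0 Pp0] : exists p0, P p0.
  by case/card_gt1P: cY => x [y [hx hy xy]]; exists (x, y); rewrite /P /= hx hy xy.
case: (@arg_minP _ _ _ p0 P (fun p => U p.1 p.2) Pp0) => [[p q]] /and3P[pY qY pq] pmin.
set m := U p q.
have m_le i j : i \in Y -> j \in Y -> i != j -> m <= U i j.
  by move=> iY jY ij; apply: (pmin (i, j)); rewrite /P /= iY jY ij.
pose K := level_class Y m.
have rec C : exists mW : R * ({set T} -> R),
    (C \in K @: Y) && (1 < #|C|)%N -> hierarchy_rep C mW.1 mW.2.
  have [/andP[/imsetP[i iY eC] cC]|_] := boolP ((C \in K @: Y) && (1 < #|C|)%N);
    last by exists (0, fun _ => 0).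
  have CY : C \subset Y by rewrite eC level_class_sub.
  have ltC : (#|C| < N)%N.
    rewrite -ltnS; apply: leq_trans ltY; rewrite ltnS; apply: proper_card.
    by rewrite properEneq CY andbT eC ((@level_class_neq Y m hY p q pY qY pq erefl)).
  have [m' [W' rep]] := IH C ltC (three_point_sub CY hY) cC.
  by exists (m', W').
have [f hf] := choice rec.
exists m, (glue_weight Y m K (fun C => (f C).1) (fun C => (f C).2)).
have K_rep C : C \in K @: Y -> (1 < #|C|)%N -> hierarchy_rep C (f C).1 (f C).2.
  by move=> CP cC; apply: hf; rewrite CP cC.
apply: glue_rep.
- exact: level_class_self.
- exact: level_class_sub.
- exact: level_class_eq.
- exact: (@level_class_neq Y m hY p q pY qY pq erefl).
- exact: U_out_level_class m_le.
- by exists p, q.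
- exact: K_rep.
- by move=> C CP cC; apply: (@level_class_min Y m hY) CP (K_rep C CP cC).
Qed.

End Hierarchy.

Section PluckerCoordinates.
Variables (R : realType) (n : nat).
Implicit Types (mu : plucker_space R n) (i j : leaf n).

Lemma pl_pair mu (p : Defs.pair n) : pl mu (val p).1 (val p).2 = mu p.
Proof.
rewrite /pl; case: insubP => [q _ vq|]; last by rewrite -surjective_pairing (valP p).
by congr (mu _); apply: val_inj; rewrite vq -surjective_pairing.
Qed.

Lemma plC mu i j : pl mu i j = pl mu j i.
Proof.
wlog lt_ij : i j / (i < j)%N.
  by move=> h; case: (ltngtP i j) => [/h//|/h//|/val_inj->].
have P1 : pair_pred (i, j) := lt_ij.
have F2 : pair_pred (j, i) = false by rewrite /pair_pred /= ltnNge ltnW.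
rewrite /pl; case: (insubP (Defs.pair n) (j, i)) => [q Pq _|_]; first by rewrite F2 in Pq.
case: (insubP (Defs.pair n) (i, j)) => [p _ vp|]; last by rewrite P1.
by case: (insubP (Defs.pair n) (i, j)) => [q _ vq|]; [congr (mu _); apply: val_inj; rewrite vp vq | rewrite P1].
Qed.

Lemma pl_lt mu (i j : leaf n) (lt_ij : (i < j)%N) :
  pl mu i j = mu (Sub (i, j) lt_ij : Defs.pair n).
Proof. exact: (pl_pair mu (Sub (i, j) lt_ij)). Qed.

Lemma ltn_leaf_neq i j : (i < j)%N -> i != j.
Proof. by move=> h; rewrite -val_eqE /= neq_ltn h. Qed.

Lemma unbar_neq_bar (k : 'I_n) : unbar k != bar k.
Proof. by rewrite -val_eqE /= neq_ltn ltn_addr. Qed.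

Lemma leafP (x : leaf n) : (exists k, x = unbar k) \/ (exists k, x = bar k).
Proof. by case: (splitP x) => k e; [left|right]; exists k; apply: val_inj. Qed.

Lemma card_pair_gt0 : (0 < n)%N -> (0 < #|{: Defs.pair n}|)%N.
Proof.
move=> n0; apply/card_gt0P.
have P : pair_pred (unbar (Ordinal n0), bar (Ordinal n0)) by rewrite /pair_pred /= ltn_addr.
by exists (Sub _ P).
Qed.

End PluckerCoordinates.

Section MinTwice.
Variable R : realType.

Lemma min_twice_subr (I : finType) (f : I -> R) c :
  min_twice f -> min_twice (fun i => f i - c).
Proof. by case=> i [j [ij [hi hj]]]; exists i, j; split => //; split => k; rewrite lerD2r. Qed.

Lemma min_twice3_max_twice (K x y z : R) :
  [\/ y = z /\ x <= y, x = z /\ y <= x | x = y /\ z <= x] ->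
  min_twice3 (K - x) (K - y) (K - z).
Proof.
pose o0 := @Ordinal 3 0 isT; pose o1 := @Ordinal 3 1 isT; pose o2 := @Ordinal 3 2 isT.
case=> [[e le]|[e le]|[e le]]; [exists o1, o2|exists o0, o2|exists o0, o1];
  (split; first by []); split; (move=> [[|[|[|m]]] Hm] /=; last by rewrite !ltnS ltn0 in Hm);
  move: le; rewrite ?e ?lerD2l ?lerN2 ?lexx //.
Qed.

Lemma min_twice3_le (a b c : R) : min_twice3 a b c ->
  [/\ (b <= a) || (c <= a), (a <= b) || (c <= b) & (a <= c) || (b <= c)].
Proof.
case=> i [j [ij [hi hj]]].
have := hi (@Ordinal 3 0 isT); have := hi (@Ordinal 3 1 isT); have := hi (@Ordinal 3 2 isT).
have := hj (@Ordinal 3 0 isT); have := hj (@Ordinal 3 1 isT); have := hj (@Ordinal 3 2 isT).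
case: i ij hi hj => [[|[|[|m]]] Hi] //; case: j => [[|[|[|m']]] Hj] //= ij _ _;
  move=> h1 h2 h3 h4 h5 h6; split; apply/orP; first [by left | by right].
Qed.

End MinTwice.

Section Parametrization.
Variables (R : realType) (n : nat).
Implicit Types (d e : prod_space R n) (i j : leaf n).

(* [a ibar] is chosen so that [mu_{i ibar} = y i] before normalization. *)
Definition leaf_coord d i : R :=
  match split i with
  | inl k => d.1.1 k
  | inr k => d.1.2 k - d.1.1 k + tree_dist d.2 (unbar k) (bar k)
  end.

Definition plucker_raw d i j := leaf_coord d i + leaf_coord d j - tree_dist d.2 i j.

Definition plucker_mean d : R :=
  (\sum_(q : Defs.pair n) plucker_raw d (val q).1 (val q).2) / #|{: Defs.pair n}|%:R.

Definition Phi d : plucker_space R n :=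
  [ffun p => plucker_raw d (val p).1 (val p).2 - plucker_mean d].

Lemma plucker_rawC d i j : plucker_raw d i j = plucker_raw d j i.
Proof. by rewrite /plucker_raw tree_distC [leaf_coord d i + _]addrC. Qed.

Lemma pl_Phi d i j : i != j -> pl (Phi d) i j = plucker_raw d i j - plucker_mean d.
Proof.
wlog lt_ij : i j / (i < j)%N.
  move=> h ij; case: (ltngtP i j) => [/h->//|lt_ji|/val_inj eij]; last by rewrite eij eqxx in ij.
  by rewrite plC plucker_rawC h // eq_sym.
by move=> _; rewrite (pl_lt _ lt_ij) ffunE.
Qed.

Lemma leaf_coord_unbar d k : leaf_coord d (unbar k) = d.1.1 k.
Proof. by rewrite /leaf_coord /unbar -[lshift n k]/(unsplit (inl k)) unsplitK. Qed.

Lemma leaf_coord_bar d k :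
  leaf_coord d (bar k) = d.1.2 k - d.1.1 k + tree_dist d.2 (unbar k) (bar k).
Proof. by rewrite /leaf_coord /bar -[rshift n k]/(unsplit (inr k)) unsplitK. Qed.

Lemma pl_Phi_diag d k : pl (Phi d) (unbar k) (bar k) = d.1.2 k - plucker_mean d.
Proof.
by rewrite pl_Phi ?unbar_neq_bar // /plucker_raw leaf_coord_unbar leaf_coord_bar; ring.
Qed.

Lemma tree_dist_lin (a : R) (w w' : {ffun Defs.split n -> R^o}) i j :
  tree_dist (a *: w + w') i j = a * tree_dist w i j + tree_dist w' i j.
Proof. by rewrite /tree_dist mulr_sumr -big_split; apply: eq_bigr => s _; rewrite !ffunE. Qed.

Lemma plucker_raw_lin (a : R) d e i j :
  plucker_raw (a *: d + e) i j = a * plucker_raw d i j + plucker_raw e i j.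
Proof.
have coord x : leaf_coord (a *: d + e) x = a * leaf_coord d x + leaf_coord e x.
  rewrite /leaf_coord; case: (split x) => k /=; rewrite !ffunE ?tree_dist_lin //=.
  rewrite /GRing.scale /=; ring.
by rewrite /plucker_raw !coord tree_dist_lin /=; ring.
Qed.

Lemma Phi_lin : linear Phi.
Proof.
move=> a d e; apply/ffunP => p; rewrite !ffunE /plucker_mean plucker_raw_lin.
under eq_bigr do rewrite plucker_raw_lin.
by rewrite big_split /= -mulr_sumr /GRing.scale /=; ring.
Qed.

HB.instance Definition _ := GRing.isLinear.Build R (prod_space R n) (plucker_space R n) *:%R Phi Phi_lin.

Lemma Phi_normalized d : (0 < n)%N -> normalized (Phi d).
Proof.
move=> n0; rewrite /normalized; under eq_bigr do rewrite ffunE.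
rewrite sumrB sumr_const -[X in _ - X]mulr_natr /plucker_mean.
by rewrite divfK ?subrr // pnatr_eq0 -lt0n card_pair_gt0.
Qed.

Lemma Phi_TSpGr d : (0 < n)%N -> prod_support d -> TSpGr (Phi d).
Proof.
move=> n0 [[_ ymin] hw]; split; first exact: Phi_normalized.
split.
- move=> i j k l ij jk kl.
  have ik := ltn_trans ij jk; have jl := ltn_trans jk kl; have il := ltn_trans ik kl.
  rewrite !pl_Phi ?ltn_leaf_neq //.
  set K := leaf_coord d i + leaf_coord d j + leaf_coord d k + leaf_coord d l
           - (plucker_mean d + plucker_mean d).
  have -> : plucker_raw d i j - plucker_mean d + (plucker_raw d k l - plucker_mean d)
            = K - dsum12 d.2 i j k l by rewrite /plucker_raw /dsum12 /K; ring.
  have -> : plucker_raw d i k - plucker_mean d + (plucker_raw d j l - plucker_mean d)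
            = K - dsum13 d.2 i j k l by rewrite /plucker_raw /dsum13 /K; ring.
  have -> : plucker_raw d i l - plucker_mean d + (plucker_raw d j k - plucker_mean d)
            = K - dsum14 d.2 i j k l by rewrite /plucker_raw /dsum14 /K; ring.
  exact/min_twice3_max_twice/tree_four_point.
- have -> : (fun k => pl (Phi d) (unbar k) (bar k)) = (fun k => d.1.2 k - plucker_mean d).
    by apply: funext => k; exact: pl_Phi_diag.
  exact: min_twice_subr.
Qed.

Lemma dsum_diff_plucker_raw d a1 a2 b1 b2 :
  dsum13 d.2 a1 a2 b1 b2 - dsum12 d.2 a1 a2 b1 b2 =
  plucker_raw d a1 a2 + plucker_raw d b1 b2 - plucker_raw d a1 b1 - plucker_raw d a2 b2.
Proof. by rewrite /plucker_raw /dsum12 /dsum13; ring. Qed.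

Lemma two_other_leaves (x : leaf n) : (1 < n)%N -> exists y z, [/\ y != x, z != x & y != z].
Proof.
move=> n1; have : (1 < #|[set~ x]|)%N by rewrite cardsC1 card_ord; lia.
by case/card_gt1P => y [z]; rewrite !inE => -[yx zx yz]; exists y, z.
Qed.

(* Quartet differences of [Phi d] are those of the tree [d.2], which
   determine it; pairwise sums then determine the leaf coordinates up to a
   common shift, which the normalization of [d.1.2] kills. *)
Lemma Phi_inj d e : (1 < n)%N -> prod_support d -> prod_support e -> Phi d = Phi e -> d = e.
Proof.
move=> n1 [[xd _] hwd] [[xe _] hwe] de.
set k := plucker_mean d - plucker_mean e.
have raw_shift x y : x != y -> plucker_raw d x y = plucker_raw e x y + k.
  by move=> xy; have := pl_Phi d xy; rewrite de pl_Phi // /k => ?; lra.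
have ew : e.2 = d.2.
  apply: tree_weights_unique => // a1 a2 b1 b2 *.
  by rewrite !dsum_diff_plucker_raw !raw_shift //; ring.
have coord_shift x : leaf_coord d x - leaf_coord e x = k / 2.
  have [y [z [yx zx yz]]] := two_other_leaves x n1.
  rewrite eq_sym in yx; rewrite eq_sym in zx.
  have := raw_shift x y yx; have := raw_shift x z zx; have := raw_shift y z yz.
  by rewrite /plucker_raw ew; lra.
have y_shift (i : 'I_n) : d.1.2 i - e.1.2 i = k.
  have := coord_shift (unbar i); have := coord_shift (bar i).
  by rewrite !leaf_coord_unbar !leaf_coord_bar ew; lra.
have k0 : k = 0.
  have : \sum_(i : 'I_n) (d.1.2 i - e.1.2 i) = k *+ n.
    by rewrite (eq_bigr (fun _ => k)) ?sumr_const ?card_ord // => i _; exact: y_shift.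
  rewrite sumrB xd xe subrr => /esym/eqP; rewrite mulrn_eq0 => /orP[/eqP n0|/eqP//].
  by rewrite n0 in n1.
have e11 : d.1.1 = e.1.1.
  by apply/ffunP => i; have := coord_shift (unbar i); rewrite !leaf_coord_unbar k0; lra.
have e12 : d.1.2 = e.1.2 by apply/ffunP => i; have := y_shift i; rewrite k0; lra.
by rewrite [d]surjective_pairing [d.1]surjective_pairing e11 e12 -ew -!surjective_pairing.
Qed.

End Parametrization.

Section RootedSplits.
Variables (n : nat) (r : leaf n).
Implicit Types (s : Defs.split n) (C : {set leaf n}).

Definition off_root s := if r \in side s then ~: side s else side s.

Lemma off_root_in s : off_root s \in val s.
Proof. by rewrite /off_root; case: ifP => _; [exact/mem_splitC/side_in_split | exact: side_in_split]. Qed.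

Lemma off_rootE s C : C \in val s -> r \notin C -> off_root s = C.
Proof.
rewrite /off_root mem_split => /orP[]/eqP-> rC; first by rewrite (negbTE rC).
by move: rC; rewrite inE negbK => ->.
Qed.

Definition rooted_cluster C := [&& r \notin C, (1 < #|C|)%N & (1 < #|~: C|)%N].

Lemma rooted_cluster_off_root s : rooted_cluster (off_root s).
Proof.
case: (sideP s) => _ c1 c2; rewrite /rooted_cluster /off_root.
by case: ifP => rs; rewrite ?inE ?rs ?setCK ?c1 ?c2.
Qed.

Lemma rooted_cluster_of_sub C : C \subset [set~ r] -> C != [set~ r] -> (1 < #|C|)%N ->
  rooted_cluster C.
Proof.
move=> sub ne c1; have rC : r \notin C by apply/negP => /(subsetP sub); rewrite !inE eqxx.
have : (#|C| < #|[set~ r]|)%N by apply: proper_card; rewrite properEneq ne sub.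
rewrite /rooted_cluster rC c1 cardsC1 card_ord => lt.
by have := cardsC C; rewrite card_ord => e; lia.
Qed.

Definition split_of_cluster C (h : rooted_cluster C) : Defs.split n.
Proof.
exists [set C; ~: C]; apply/existsP; exists C.
by case/and3P: h => _ c1 c2; rewrite eqxx c1 c2.
Defined.

Lemma off_root_split_of_cluster C (h : rooted_cluster C) : off_root (split_of_cluster h) = C.
Proof. by apply: off_rootE; [rewrite !inE eqxx | case/and3P: h]. Qed.

Lemma sum_off_root (R : realType) (g : {set leaf n} -> R) :
  \sum_s g (off_root s) = \sum_(C | rooted_cluster C) g C.
Proof.
rewrite (partition_big off_root rooted_cluster) => [|s _]; last exact: rooted_cluster_off_root.
apply: eq_bigr => C hC.
rewrite (big_pred1 (split_of_cluster hC)) ?off_root_split_of_cluster // => s /=.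
apply/eqP/eqP => [eC|->]; last exact: off_root_split_of_cluster.
by apply: val_inj; rewrite (split_valE (off_root_in s)) eC.
Qed.

End RootedSplits.

Lemma tree_of_hierarchy (R : realType) (n : nat) (r : leaf n) (W : {set leaf n} -> R) :
  (forall C, 0 <= W C) -> (forall C, W C != 0 -> rooted_cluster r C) ->
  (forall C D, W C != 0 -> W D != 0 -> [|| [disjoint C & D], C \subset D | D \subset C]) ->
  exists2 w, treespace w &
    forall i j, tree_dist w i j = \sum_(C : {set leaf n}) ((i \in C) != (j \in C))%:R * W C / 2.
Proof.
move=> W0 Wroot Wlam; exists [ffun s => W (off_root r s) / 2].
  split=> [s|s t]; rewrite !ffunE; first by rewrite divr_ge0.
  rewrite !mulf_eq0 !invr_eq0 !negb_or => /andP[Ws _] /andP[Wt _].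
  rewrite (compatibleE (off_root_in r s) (off_root_in r t)) /compatible_sets.
  by case/or3P: (Wlam _ _ Ws Wt) => ->; rewrite ?orbT.
move=> i j; rewrite tree_distE.
under eq_bigr do rewrite ffunE (separatesE _ _ (off_root_in r _)).
rewrite (sum_off_root r (fun C => W C / 2 * ((i \in C) != (j \in C))%:R)).
rewrite big_rmcond => [|C nC]; last first.
  have -> : W C = 0 by apply: contraNeq nC; exact: Wroot.
  by rewrite !mul0r.
by apply: eq_bigr => C _; ring.
Qed.

Section Surjectivity.
Variables (R : realType) (n : nat) (mu : plucker_space R n).
Hypothesis n_gt1 : (1 < n)%N.
Hypothesis hmu : TSpGr mu.

Lemma root_subproof : (0 < n + n)%N. Proof. by rewrite addn_gt0 ltnW. Qed.
Definition root : leaf n := Ordinal root_subproof.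

Definition farris (i j : leaf n) : R := pl mu i j - pl mu i root - pl mu j root.

Lemma farrisC i j : farris i j = farris j i.
Proof. by rewrite /farris plC; ring. Qed.

(* The four-point relation on [root < a < b < c]. *)
Lemma farris_sorted (a b c : leaf n) : (0 < a)%N -> (a < b)%N -> (b < c)%N ->
  [/\ (farris a c <= farris a b) || (farris b c <= farris a b),
      (farris a b <= farris a c) || (farris b c <= farris a c) &
      (farris a b <= farris b c) || (farris a c <= farris b c)].
Proof.
move=> a0 ab bc; case: hmu => _ [four_point _].
have := four_point root a b c a0 ab bc.
set S := pl mu a root + pl mu b root + pl mu c root.
have -> : pl mu root a + pl mu b c = S + farris b c by rewrite /farris /S (plC mu root a); ring.
have -> : pl mu root b + pl mu a c = S + farris a c by rewrite /farris /S (plC mu root b); ring.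
have -> : pl mu root c + pl mu a b = S + farris a b by rewrite /farris /S (plC mu root c); ring.
by case/min_twice3_le; rewrite !lerD2l => h1 h2 h3; split; rewrite orbC.
Qed.

Lemma farris_three_point : three_point farris [set~ root].
Proof.
move=> i j k; rewrite !inE => ir jr kr ij jk ik; rewrite ge_min.
have pos x : x != root -> (0 < x)%N.
  by move=> xr; rewrite lt0n; apply: contra xr => /eqP h; apply/eqP/val_inj.
wlog lij : i j ir jr ij jk ik / (i < j)%N.
  move=> H; case: (ltngtP i j) => [l|l|e]; first exact: H.
  - by rewrite orbC (farrisC i j); apply: H => //; rewrite eq_sym.
  - by move: ij; rewrite (ord_inj e) eqxx.
case: (ltngtP j k) => [jk'|kj|e]; last by move: jk; rewrite (ord_inj e) eqxx.
  by case: (farris_sorted (pos i ir) lij jk').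
case: (ltngtP i k) => [ik'|ki|e]; last by move: ik; rewrite (ord_inj e) eqxx.
  by case: (farris_sorted (pos i ir) ik' kj) => _ h _; rewrite (farrisC j k).
by case: (farris_sorted (pos k kr) ki lij) => _ _ h; rewrite (farrisC i k) (farrisC j k).
Qed.

Lemma pl_tree_decomposition : exists (a : leaf n -> R) (w : {ffun Defs.split n -> R}),
  treespace w /\ forall i j, i != j -> pl mu i j = a i + a j - tree_dist w i j.
Proof.
have cY : (1 < #|[set~ root]|)%N by rewrite cardsC1 card_ord; lia.
have [m [W [W0 Wsupp Wlam _ Wrep]]] := three_point_hierarchy farrisC farris_three_point cY.
have Wroot C : W C != 0 -> rooted_cluster root C.
  by move=> /Wsupp[]; exact: rooted_cluster_of_sub.
have [w hw wdist] := tree_of_hierarchy W0 Wroot Wlam.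
have W_root (C : {set leaf n}) : root \in C -> W C = 0.
  by move=> rC; apply: contraTeq rC => /Wroot/and3P[].
pose P i := \sum_(C : {set leaf n}) (i \in C)%:R * W C.
pose Q i j := \sum_(C : {set leaf n}) ((i \in C) && (j \in C))%:R * W C.
have distPQ i j : tree_dist w i j = (P i + P j) / 2 - Q i j.
  rewrite wdist /P /Q -big_split /= mulr_suml -sumrB; apply: eq_bigr => C _.
  by case: (i \in C); case: (j \in C); rewrite /=; lra.
have root_terms (b : bool) (C : {set leaf n}) : ((root \in C) && b)%:R * W C = 0.
  have [rC|_] := boolP (root \in C); last by rewrite mul0r.
  by rewrite W_root // mulr0.
have P_root : P root = 0.
  by apply: big1 => C _; have := root_terms true C; rewrite andbT.
have Q_root i : Q root i = 0 by apply: big1 => C _; exact: root_terms.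
have Q_root' i : Q i root = 0 by apply: big1 => C _; rewrite andbC; exact: root_terms.
have farrisQ i j : i != root -> j != root -> i != j -> farris i j = m + Q i j.
  move=> ir jr ij; rewrite Wrep ?inE //; congr (_ + _).
  by rewrite big_mkcond /Q; apply: eq_bigr => C _; case: (_ && _); rewrite ?mul1r ?mul0r.
exists (fun i => if i == root then - m / 2 else pl mu i root + m / 2 + P i / 2), w.
split=> // i j ij; rewrite distPQ.
have [ir|ir] := eqVneq i root; have [jr|jr] := eqVneq j root.
- by rewrite ir jr eqxx in ij.
- by rewrite ir P_root Q_root plC; lra.
- by rewrite jr P_root Q_root'; lra.
- by have := farrisQ i j ir jr ij; rewrite /farris; lra.
Qed.

Lemma Phi_surj : exists d, prod_support d /\ Phi d = mu.
Proof.
have [a [w [hw arep]]] := pl_tree_decomposition.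
case: hmu => mu_norm [_ mu_min].
pose y k := pl mu (unbar k) (bar k).
pose t := (\sum_k y k) / n%:R.
have nt : (n%:R : R) != 0 by rewrite pnatr_eq0 -lt0n ltnW.
pose d : prod_space R n := ([ffun k => a (unbar k) - t / 2], [ffun k => y k - t], w).
have coord x : leaf_coord d x = a x - t / 2.
  case: (leafP x) => [[k ->]|[k ->]]; first by rewrite leaf_coord_unbar ffunE.
  by rewrite leaf_coord_bar !ffunE /= /y (arep _ _ (unbar_neq_bar k)); lra.
have raw x z : x != z -> plucker_raw d x z = pl mu x z - t.
  by move=> xz; rewrite /plucker_raw !coord (arep x z xz); lra.
have mean : plucker_mean d = - t.
  rewrite /plucker_mean (eq_bigr (fun q => mu q - t)) => [|q _]; last first.
    by rewrite raw ?pl_pair //; exact: ltn_leaf_neq (valP q).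
  rewrite sumrB mu_norm sumr_const sub0r -[t *+ _]mulr_natr mulNr mulfK //.
  by rewrite pnatr_eq0 -lt0n card_pair_gt0 // ltnW.
exists d; split.
  split; [split | exact: hw].
  - rewrite /normalized (eq_bigr (fun k => y k - t)) => [|k _]; last by rewrite ffunE.
    by rewrite sumrB sumr_const card_ord -[_ *+ n]mulr_natr /t divfK ?subrr.
  - have -> : (fun k => d.1.2 k) = (fun k => y k - t) by apply: funext => k; rewrite ffunE.
    exact: min_twice_subr.
apply/ffunP => p; rewrite ffunE raw ?pl_pair ?mean; last exact: ltn_leaf_neq (valP p).
by rewrite opprK subrK.
Qed.

End Surjectivity.

Theorem proposition5p1 (R : realType) (n : nat) :
  (2 <= n)%N ->
  exists Phi : prod_space R n -> plucker_space R n, fan_iso_onto_TSpGr Phi.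
Proof.
move=> n2; exists (@Phi R n); split; [|split; [|split]].
- by move=> d; apply: Phi_TSpGr; apply: leq_trans n2.
- by move=> mu; exact: Phi_surj.
- by move=> d e; exact: Phi_inj.
- by move=> S sigma _ _; exists (GRing.Linear.clone _ _ _ _ (@Phi R n) _).
Qed.
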